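(* Let $f:\{0,1\}^{10}\to\{0,1\}$ be fully sensitive at $0$ with $d(f)\le 4$. Then the symmetrization polynomial of $f$ is \[ \tilde{p}(x) = -\frac{x^{4}}{144}+\frac{5 x^{3}}{36}-\frac{125 x^{2}}{144}+\frac{125 x}{72}. \]
   Context: $d(f)$ is the degree of the unique multilinear real polynomial $q$ agreeing with $f$ on $\{0,1\}^{10}$. $f$ is fully sensitive at $0$ if $f(0)=0$ and $f(e_i)=1$ for every unit vector $e_i$. The symmetrization polynomial of $f$ is the univariate real polynomial $p$ of degree at most $d(f)$ with $p(x_1+\dots+x_{10})=\frac{1}{10!}\sum_{\pi\in S_{10}} q(\pi(x))$ for all $x\in\{0,1\}^{10}$ ($\pi(x)$ permutes coordinates); equivalently $p(k)$ is the fraction of inputs of Hamming weight $k$ on which $f=1$, for $k=0,\dots,10$. *)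

From HB Require Import structures.
From mathcomp Require Import all_boot all_order all_algebra.
Set Implicit Arguments. Unset Strict Implicit. Unset Printing Implicit Defensive.
Import Order.TTheory GRing.Theory Num.Theory.
Local Open Scope ring_scope.

Definition cube := {ffun 'I_10 -> bool}.
Definition boolfun := cube -> bool.

Definition hweight (x : cube) : nat := #|[set i | x i]|.

Definition zero_pt : cube := [ffun => false].
Definition unit_pt (i : 'I_10) : cube := [ffun j => j == i].

Definition fully_sensitive_at0 (f : boolfun) : Prop :=
  f zero_pt = false /\ forall i : 'I_10, f (unit_pt i) = true.

Definition ml_eval (R : realFieldType) (c : {set 'I_10} -> R) (x : cube) : R :=
  \sum_(S : {set 'I_10}) c S * \prod_(i in S) ((x i)%:R : R).

(* d is the degree d(f) of the (unique) multilinear real polynomial q agreeing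
   with f on {0,1}^10: q has coefficients c, agrees with f, and d is the
   largest size of a monomial with non-zero coefficient. *)
Local Open Scope nat_scope.
Definition ml_degree (R : realFieldType) (f : boolfun) (d : nat) : Prop :=
  exists c : {set 'I_10} -> R,
    (forall x : cube, ml_eval c x = ((f x)%:R : R)) /\
    d = \max_(S : {set 'I_10} | c S != 0%R) #|S|.

Local Open Scope ring_scope.
Definition wfrac (R : realFieldType) (f : boolfun) (k : nat) : R :=
  (#|[set x : cube | (hweight x == k) && f x]|%:R) /
  (#|[set x : cube | hweight x == k]|%:R).

Definition symm_poly_spec (R : realFieldType) (f : boolfun) (d : nat)
    (p : {poly R}) : Prop :=
  (size p <= d.+1)%N /\ forall k : 'I_11, p.[(k : nat)%:R] = wfrac R f k.

Definition ptilde (R : realFieldType) : {poly R} :=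
  (- (1 / 144)) *: 'X^4 + (5 / 36) *: 'X^3 - (125 / 144) *: 'X^2
  + (125 / 72) *: 'X.

From HB Require Import structures.
From mathcomp Require Import all_boot all_order all_algebra.
From mathcomp Require Import lra.
Set Implicit Arguments. Unset Strict Implicit. Unset Printing Implicit Defensive.
Import Order.TTheory GRing.Theory Num.Theory.
Local Open Scope ring_scope.

(* Averaging the multilinear representation of f over the inputs of Hamming
   weight k turns the monomial of a set S into C(k,|S|)/C(10,|S|), a polynomial
   of degree |S| in k; hence the symmetrization polynomial p exists and has
   degree at most d(f) <= 4.  Full sensitivity at 0 gives p(0) = 0 and
   p(1) = 1, and p(k) is a fraction of inputs, so 0 <= p(k) <= 1 for
   k = 0..10.  These linear constraints on the five coefficients of p have
   ptilde as their only solution, which gives both existence and uniqueness. *)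

Lemma card_set_sum_bool (T : finType) (P Q : pred T) :
  #|[set x | P x & Q x]| = (\sum_(x | P x) Q x)%N.
Proof. by rewrite -sum1dep_card big_mkcondr; apply: eq_bigr => x _; case: (Q x). Qed.

Lemma card_supersets (T : finType) (S : {set T}) k : (k <= #|T|)%N ->
  #|[set A : {set T} | S \subset A & #|A| == k]| = 'C(#|T| - #|S|, #|T| - k).
Proof.
move=> le_kT; have -> : (#|T| - #|S| = #|~: S|)%N by rewrite [#|~: S|]cardsCs setCK.
rewrite -cards_draws -(card_imset _ (@setC_inj _)).
apply: eq_card => B; rewrite inE; apply/imsetP/andP => [[A]|[sBS /eqP cB]].
  by rewrite inE => /andP[sSA /eqP cA] ->; rewrite setCS sSA cardsCs setCK cA.
exists (~: B); last by rewrite setCK.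
by rewrite inE -setCS setCK sBS cardsCs setCK cB subKn /=.
Qed.

Lemma mul_bin_bin n k s : (k <= n)%N ->
  ('C(n, k) * 'C(k, s) = 'C(n, s) * 'C(n - s, n - k))%N.
Proof.
move=> le_kn; have := card_draws 'I_n; rewrite card_ord => draws.
rewrite -!draws -!sum_nat_cond_const.
transitivity
  (\sum_(A : {set 'I_n} | #|A| == k) \sum_(B : {set 'I_n} | #|B| == s) (B \subset A))%N.
  apply: eq_bigr => A /eqP <-.
  by rewrite -cards_draws -card_set_sum_bool; apply: eq_card => B; rewrite !inE andbC.
rewrite exchange_big /=; apply: eq_bigr => B /eqP <-.
have := card_supersets B (k:=k); rewrite card_ord => <- //.
by rewrite -card_set_sum_bool; apply: eq_card => A; rewrite !inE andbC.
Qed.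

Definition ones (x : cube) : {set 'I_10} := [set i | x i].
Definition cube_of_set (A : {set 'I_10}) : cube := [ffun i => i \in A].

Lemma onesK : cancel ones cube_of_set.
Proof. by move=> x; apply/ffunP => i; rewrite ffunE inE. Qed.

Lemma cube_of_setK : cancel cube_of_set ones.
Proof. by move=> A; apply/setP => i; rewrite inE ffunE. Qed.

Lemma card_cube_ones (P : pred {set 'I_10}) :
  #|[set x : cube | P (ones x)]| = #|[set A | P A]|.
Proof.
rewrite -(on_card_preimset (onW_bij _ (Bijective onesK cube_of_setK))).
by apply: eq_card => x; rewrite !inE.
Qed.

Lemma card_weight_level k : #|[set x : cube | hweight x == k]| = 'C(10, k).
Proof. by rewrite (card_cube_ones (fun A => #|A| == k)) card_draws card_ord. Qed.

Lemma prod_coords (R : comPzSemiRingType) (x : cube) (S : {set 'I_10}) :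
  \prod_(i in S) ((x i)%:R : R) = (S \subset ones x)%:R.
Proof.
have [/subsetP sSx | /subsetPn [i Si]] := boolP (S \subset ones x).
  by rewrite big1 // => i /sSx; rewrite inE => ->.
by rewrite inE => /negbTE xi; rewrite (bigD1 i) //= xi mul0r.
Qed.

Lemma wfrac_binomial_sum (R : realFieldType) (f : boolfun) c k :
  (forall x, ml_eval c x = (f x)%:R) -> (k <= 10)%N ->
  wfrac R f k = \sum_S c S * ('C(k, #|S|)%:R / 'C(10, #|S|)%:R).
Proof.
move=> c_f le_k10; rewrite /wfrac card_weight_level.
have -> : (#|[set x : cube | (hweight x == k) && f x]|%:R : R) =
          \sum_S c S * 'C(10 - #|S|, 10 - k)%:R.
  rewrite card_set_sum_bool natr_sum.
  under eq_bigr => x _ do rewrite -c_f /ml_eval; rewrite exchange_big /=.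
  apply: eq_bigr => S _; under eq_bigr => x _ do rewrite prod_coords.
  rewrite -mulr_sumr -natr_sum -card_set_sum_bool.
  rewrite (card_cube_ones (fun A => (#|A| == k) && (S \subset A))).
  have := card_supersets S (k:=k); rewrite card_ord => <- //.
  by congr (_ * _%:R); apply: eq_card => A; rewrite !inE andbC.
rewrite mulr_suml; apply: eq_bigr => S _.
have le_S10 : (#|S| <= 10)%N by have := max_card S; rewrite card_ord.
rewrite -mulrA; congr (_ * _); apply/eqP.
rewrite eqr_div ?pnatr_eq0 -?lt0n ?bin_gt0 // -!natrM.
by rewrite mulnC [('C(k, _) * _)%N]mulnC mul_bin_bin.
Qed.

Section BinomialPolynomial.
Variable R : numFieldType.

Definition binom_poly (m : nat) : {poly R} :=
  (m`!%:R)^-1 *: \prod_(i < m) ('X - i%:R%:P).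

Lemma size_binom_poly m : (size (binom_poly m) <= m.+1)%N.
Proof.
apply: leq_trans (size_scale_leq _ _) _; rewrite size_prod_XsubC.
by rewrite /index_enum unlock -enumT size_enum_ord.
Qed.

Lemma horner_binom_poly m k : (binom_poly m).[k%:R] = 'C(k, m)%:R.
Proof.
have falling : (\prod_(i < m) ('X - i%:R%:P)).[k%:R] = (k ^_ m)%:R :> R.
  rewrite horner_prod; have [lt_km | le_mk] := ltnP k m.
    by rewrite ffact_small // (bigD1 (Ordinal lt_km)) //= hornerXsubC subrr mul0r.
  rewrite ffact_prod natr_prod; apply: eq_bigr => i _.
  by rewrite hornerXsubC natrB // ltnW // (leq_trans (ltn_ord i)).
by rewrite hornerZ falling -bin_ffact natrM mulrC mulfK // pnatr_eq0 -lt0n fact_gt0.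
Qed.

End BinomialPolynomial.

Lemma symm_poly_exists (R : realFieldType) (f : boolfun) d :
  ml_degree R f d -> exists p : {poly R}, symm_poly_spec f d p.
Proof.
move=> [c [c_f ->]].
exists (\sum_S (c S / 'C(10, #|S|)%:R) *: binom_poly R #|S|); split.
  apply: (big_ind (fun q : {poly R} => size q <= _)%N) => [|p q sp sq|S _].
  - by rewrite size_poly0.
  - by rewrite (leq_trans (size_polyD _ _)) // geq_max sp sq.
  have [->|cS_neq0] := eqVneq (c S) 0; first by rewrite mul0r scale0r size_poly0.
  apply: leq_trans (size_scale_leq _ _) _; apply: leq_trans (size_binom_poly _ _) _.
  by rewrite ltnS (@leq_bigmax_cond _ _ (fun S : {set 'I_10} => #|S|) _ cS_neq0).
move=> k; rewrite (wfrac_binomial_sum c_f); last exact: ltn_ord k.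
rewrite horner_sum; apply: eq_bigr => S _.
by rewrite hornerZ horner_binom_poly mulrAC -mulrA.
Qed.

Lemma poly_eq_on_nat (R : numDomainType) n (p q : {poly R}) :
  (size p <= n)%N -> (size q <= n)%N ->
  (forall i, (i < n)%N -> p.[i%:R] = q.[i%:R]) -> p = q.
Proof.
move=> sp sq pq; apply/eqP; rewrite -subr_eq0; apply/eqP.
apply: (@roots_geq_poly_eq0 _ _ [seq i%:R | i <- iota 0 n]).
- apply/allP => x /mapP [i]; rewrite mem_iota => /andP [_ lt_in] ->.
  by rewrite /root hornerD hornerN pq // subrr.
- by rewrite map_inj_uniq ?iota_uniq // => i j /eqP; rewrite eqr_nat => /eqP.
- by rewrite size_map size_iota (leq_trans (size_polyD _ _)) // size_polyN geq_max sp sq.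
Qed.

Lemma size_ptilde (R : realFieldType) : (size (ptilde R) <= 5)%N.
Proof.
have sD (p q : {poly R}) : (size p <= 5)%N -> (size q <= 5)%N -> (size (p + q)%R <= 5)%N.
  by move=> sp sq; apply: leq_trans (size_polyD p q) _; rewrite geq_max sp sq.
have sX a i : (i <= 4)%N -> (size (a *: 'X^i : {poly R}) <= 5)%N.
  by move=> le_i4; apply: leq_trans (size_scale_leq _ _) _; rewrite size_polyXn.
rewrite /ptilde -scaleNr; repeat apply: (sD _ _).
all: first [exact: (sX _ _) | exact: (sX _ 1%N)].
Qed.

Lemma horner_ptilde (R : realFieldType) (x : R) :
  (ptilde R).[x] =
  - (1 / 144) * x ^+ 4 + 5 / 36 * x ^+ 3 - 125 / 144 * x ^+ 2 + 125 / 72 * x.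
Proof. by rewrite /ptilde !(hornerD, hornerN, hornerZ, hornerXn, hornerX). Qed.

Lemma bounded_quartic_eq_ptilde (R : realFieldType) (p : {poly R}) :
  (size p <= 5)%N -> p.[0] = 0 -> p.[1] = 1 ->
  (forall k, (k <= 10)%N -> 0 <= p.[k%:R] <= 1) -> p = ptilde R.
Proof.
move=> sp p0 p1 bounded.
have coefs x : p.[x] = p`_0 + p`_1 * x + p`_2 * x ^+ 2 + p`_3 * x ^+ 3 + p`_4 * x ^+ 4.
  rewrite (horner_coef_wide _ sp) !big_ord_recl big_ord0 addr0 /=.
  by rewrite expr0 mulr1 expr1 !addrA.
(* ptilde attains exactly these five bounds, and together with p(0) = 0 and
   p(1) = 1 they already determine the five coefficients of p. *)
have /andP[_ le2] := bounded 2%N isT.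
have /andP[ge5 _] := bounded 5%N isT.
have /andP[_ le8] := bounded 8%N isT.
have /andP[_ le9] := bounded 9%N isT.
have /andP[ge10 _] := bounded 10%N isT.
rewrite !coefs in p0 p1 le2 ge5 le8 le9 ge10.
apply: (poly_eq_on_nat sp (size_ptilde R)) => -[|[|[|[|[|//]]]]] _;
  rewrite coefs horner_ptilde; lra.
Qed.

Lemma wfrac_bounds (R : realFieldType) (f : boolfun) k :
  (k <= 10)%N -> 0 <= wfrac R f k <= 1.
Proof.
move=> le_k10; rewrite /wfrac card_weight_level.
have C_gt0 : 0 < 'C(10, k)%:R :> R by rewrite ltr0n bin_gt0.
rewrite divr_ge0 ?ler0n //= ler_pdivrMr // mul1r ler_nat -card_weight_level.
by apply/subset_leq_card/subsetP => x; rewrite !inE => /andP[].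
Qed.

Lemma wfrac_weight0 (R : realFieldType) (f : boolfun) :
  f zero_pt = false -> wfrac R f 0 = 0.
Proof.
move=> f0; rewrite /wfrac.
suff -> : [set x : cube | (hweight x == 0%N) && f x] = set0 by rewrite cards0 mul0r.
apply/setP => x; rewrite !inE; case: eqP => //= /cards0_eq ones_x.
suff -> : x = zero_pt by [].
by rewrite -(onesK x) /ones ones_x; apply/ffunP => i; rewrite !ffunE inE.
Qed.

Lemma wfrac_weight1 (R : realFieldType) (f : boolfun) :
  (forall i, f (unit_pt i)) -> wfrac R f 1 = 1.
Proof.
move=> f1; rewrite /wfrac.
suff -> : [set x : cube | (hweight x == 1%N) && f x] = [set x | hweight x == 1%N].
  by rewrite divff // card_weight_level pnatr_eq0.
apply/setP => x; rewrite !inE; case: eqP => //= /eqP /cards1P [i ones_x].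
suff -> : x = unit_pt i by apply: f1.
by rewrite -(onesK x) /ones ones_x; apply/ffunP => j; rewrite !ffunE inE.
Qed.

Theorem theorem11 (R : realFieldType) (f : boolfun) (d : nat) :
  ml_degree R f d -> (d <= 4)%N -> fully_sensitive_at0 f ->
  symm_poly_spec f d (ptilde R) /\
  (forall p : {poly R}, symm_poly_spec f d p -> p = ptilde R).
Proof.
move=> deg_f le_d4 [f0 f1].
have spec_ptilde p : symm_poly_spec f d p -> p = ptilde R.
  move=> [size_p p_wfrac]; apply: bounded_quartic_eq_ptilde.
  - by apply: leq_trans size_p _; rewrite ltnS.
  - by have := p_wfrac ord0; rewrite wfrac_weight0.
  - by have := p_wfrac (inord 1); rewrite inordK // wfrac_weight1.
  move=> k le_k10; rewrite -(inordK (le_k10 : k < 11)%N) p_wfrac.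
  by rewrite wfrac_bounds // inordK.
have [p sym_p] := symm_poly_exists deg_f.
by split=> [|q /spec_ptilde //]; rewrite -(spec_ptilde p).
Qed.
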